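(* Fix $V$ and $k\ge1$. For densities $\rho\in\{n/V: n=0,1,2,\dots\}$, the canonical expectation $\rho\mapsto\langle\exp(-\lambda N_k)\rangle^{C}_V(\rho)$ is a monotonically decreasing function of $\rho$ for every $\lambda>0$, and for every integer $r\ge1$ the moment $\rho\mapsto\langle N_k^r\rangle^{C}_V(\rho)$ is a monotonically increasing function of $\rho$.
   Context: Fix exponents $\alpha_1\ge\alpha_2\ge\alpha_3>0$ with $\alpha_1+\alpha_2+\alpha_3=1$ and let $\Lambda_V=\{x\in\mathbb{R}^3:0\le x_j\le V^{\alpha_j}\}$. The one-particle Hamiltonian $t_V$ is $-\Delta/2$ on $L^2(\Lambda_V)$ with Dirichlet boundary conditions, with eigenvalues $E_1(V)<E_2(V)\le\dots$ (these are $\frac{\pi^2}{2}\sum_j n_j^2V^{-2\alpha_j}$, $n_j\ge1$). For the perfect Bose gas at inverse temperature $\beta>0$, $T_V^{(n)}$ is the $n$-particle free Hamiltonian (generated by $t_V$) on the symmetric $n$-particle space, $Z_V(n)=\mathrm{Tr}\,e^{-\beta T_V^{(n)}}$ ($Z_V(0)=1$), and the canonical state at density $\rho=n/V$ is $\langle\cdot\rangle^C_V(\rho)=Z_V(n)^{-1}\mathrm{Tr}(\cdot\,e^{-\beta T_V^{(n)}})$. $N_k$ is the occupation number of the $k$-th one-particle eigenstate (a commuting family, treated as random variables). *)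

From HB Require Import structures.
From mathcomp Require Import all_boot all_order all_algebra.
From mathcomp Require Import all_classical all_reals all_analysis.
From mathcomp Require Import finmap multiset.
Set Implicit Arguments. Unset Strict Implicit. Unset Printing Implicit Defensive.
Import Order.TTheory GRing.Theory Num.Theory.
Local Open Scope ring_scope.

(* One-particle eigenstates of t_V (Dirichlet -Delta/2 on the box Lambda_V)
   are labelled by triples of quantum numbers (n1,n2,n3), n_j >= 1.
   We encode n_j = j_j + 1 with (j1,j2,j3) : nat * nat * nat. *)
Definition mode := (nat * nat * nat)%type.

Definition eigE {R : realType} (a1 a2 a3 V : R) (k : mode) : R :=
  (pi ^+ 2 / 2) *
  ((k.1.1.+1%:R) ^+ 2 * V `^ (- (2 * a1)) +
   (k.1.2.+1%:R) ^+ 2 * V `^ (- (2 * a2)) +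
   (k.2.+1%:R) ^+ 2 * V `^ (- (2 * a3))).

(* An orthonormal eigenbasis of the symmetric n-particle space is indexed by
   multisets of modes of total size n; the multiplicity [m k] is the
   occupation number N_k of that basis vector. *)
Definition nparticles (m : multiset mode) : nat :=
  (\sum_(k <- finsupp m) m k)%N.

Definition energy {R : realType} (a1 a2 a3 V : R) (m : multiset mode) : R :=
  \sum_(k <- finsupp m) (m k)%:R * eigE a1 a2 a3 V k.

Local Open Scope ereal_scope.

(* Tr (F(N) e^{-beta T_V^(n)}) for a nonnegative function F of the occupation
   numbers: sum over the eigenbasis of the n-particle symmetric space. *)
Definition ctrace {R : realType} (a1 a2 a3 V beta : R) (n : nat)
  (F : multiset mode -> R) : \bar R :=
  \esum_(m in [set m : multiset mode | nparticles m = n])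
     (F m * expR (- beta * energy a1 a2 a3 V m))%:E.

Definition Zcan {R : realType} (a1 a2 a3 V beta : R) (n : nat) : \bar R :=
  ctrace a1 a2 a3 V beta n (fun _ => 1%R).

Local Close Scope ereal_scope.

Definition cexp {R : realType} (a1 a2 a3 V beta : R) (n : nat) (k : mode)
  (f : nat -> R) : R :=
  fine (ctrace a1 a2 a3 V beta n (fun m => f (m k))) /
  fine (Zcan a1 a2 a3 V beta n).

From HB Require Import structures.
From mathcomp Require Import all_boot all_order all_algebra.
From mathcomp Require Import all_classical all_reals all_analysis.
From mathcomp Require Import finmap multiset.
From mathcomp Require Import ring lra.
Import Order.TTheory GRing.Theory Num.Theory.
Set Implicit Arguments. Unset Strict Implicit. Unset Printing Implicit Defensive.
Local Open Scope ring_scope.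

(* Write x_k = exp(-beta E_k) and Z(n) for the n-particle partition function.
   Splitting the configurations according to the occupation of mode k gives
     <f(N_k)>_n = f(0) + sum_(j=1..n) (f(j) - f(j-1)) x_k^j Z(n-j) / Z(n).
   The sequence Z is log-concave: for finitely many modes it is a convolution
   of geometric sequences, which preserves log-concavity, and the Boltzmann
   weights are summable, so Z is the supremum of these finite-mode partition
   functions and inherits the property.  Log-concavity makes every ratio
   Z(n-j) / Z(n) nondecreasing in n, hence <f(N_k)>_n is nondecreasing for
   f(N) = N^r and nonincreasing for f(N) = exp(-lambda N). *)

Section LogConcave.
Variable R : realFieldType.
Implicit Types (A H z f : nat -> R) (c : R).

(* The ratio form A(b+1)/A(b) <= A(a+1)/A(a); it also holds for sequences with
   zeros such as the Kronecker delta. *)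
Definition logconcave A := forall a b, (a <= b)%N -> A a * A b.+1 <= A a.+1 * A b.

Lemma logconcave_local A : (forall n, 0 < A n) ->
  (forall n, A n * A n.+2 <= A n.+1 ^+ 2) -> logconcave A.
Proof.
move=> A_gt0 A_lc a b /subnK <-; elim: (b - a)%N => [|d IH]; first by rewrite mulrC.
rewrite addSn; set u := (d + a)%N in IH *.
have ge0 n := ltW (A_gt0 n).
rewrite -(ler_pM2r (mulr_gt0 (A_gt0 u) (A_gt0 u.+1))).
have -> : A a * A u.+2 * (A u * A u.+1) = (A a * A u.+1) * (A u * A u.+2) by ring.
have -> : A a.+1 * A u.+1 * (A u * A u.+1) = (A a.+1 * A u) * A u.+1 ^+ 2 by ring.
by apply: ler_pM; rewrite ?mulr_ge0.
Qed.

Lemma logconcave_conv_geometric A H c :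
  0 < c -> 0 < A 0 -> (forall n, 0 <= A n) -> logconcave A ->
  H 0 = A 0 -> (forall n, H n.+1 = A n.+1 + c * H n) -> logconcave H.
Proof.
move=> c_gt0 A0_gt0 A_ge0 A_lc H0 HS.
have H_gt0 n : 0 < H n.
  elim: n => [|n IH]; first by rewrite H0.
  by rewrite HS ltr_wpDl // mulr_gt0.
have cross n m : (n <= m)%N -> H n * A m.+1 <= H n.+1 * A m.
  elim: n m => [|n IH] m nm.
    rewrite HS H0 mulrDl ler_wpDr ?A_lc //.
    by rewrite mulr_ge0 ?A_ge0 // mulr_ge0 // ltW.
  rewrite [H n.+1]HS [H n.+2]HS !mulrDl.
  by rewrite lerD ?A_lc // -!mulrA ler_pM2l // IH // ltnW.
apply: logconcave_local => // n.
rewrite [H n.+2]HS mulrDr expr2 [X in _ <= _ * X]HS mulrDr lerD ?cross //.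
by rewrite mulrCA [X in _ <= X]mulrCA [H n.+1 * H n]mulrC.
Qed.

Section TailMean.
Variables (z : nat -> R) (c : R).
Hypotheses (z_gt0 : forall n, 0 < z n) (z_lc : logconcave z) (c_ge0 : 0 <= c).

Let z_ge0 n : 0 <= z n := ltW (z_gt0 n).

(* c^j z(n-j) / z(n) is the probability that a mode of weight c holds at least
   j of the n particles: this is the mean of f summed by parts. *)
Definition tail_mean f n :=
  f 0%N + \sum_(j < n) (f j.+1 - f j) * c ^+ j.+1 * (z (n - j.+1) / z n).

Lemma tail_meanMz f n : tail_mean f n * z n =
  f 0%N * z n + \sum_(j < n) (f j.+1 - f j) * c ^+ j.+1 * z (n - j.+1).
Proof.
rewrite /tail_mean mulrDl mulr_suml; congr (_ + _); apply: eq_bigr => j _.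
by rewrite mulrA divfK ?gt_eqF.
Qed.

Lemma tail_mean_nondecr f : (forall j, f j <= f j.+1) ->
  {homo tail_mean f : n1 n2 / (n1 <= n2)%N >-> n1 <= n2}.
Proof.
move=> f_nd; apply: homo_leq => [//|? ? ?|n]; first exact: le_trans.
rewrite /tail_mean lerD2l big_ord_recr /= ler_wpDr //.
  by rewrite !mulr_ge0 ?subr_ge0 ?exprn_ge0 ?invr_ge0.
apply: ler_sum => j _; rewrite ler_wpM2l ?mulr_ge0 ?subr_ge0 ?exprn_ge0 //.
rewrite subSS ler_pdivrMr // mulrAC ler_pdivlMr // -(subnSK (ltn_ord j)).
by rewrite z_lc // leq_subr.
Qed.

Lemma tail_meanN f n : tail_mean (fun j => - f j) n = - tail_mean f n.
Proof.
rewrite /tail_mean opprD -sumrN; congr (_ + _).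
by apply: eq_bigr => j _; rewrite -opprD !mulNr.
Qed.

Lemma tail_mean_nonincr f : (forall j, f j.+1 <= f j) ->
  {homo tail_mean f : n1 n2 / (n1 <= n2)%N >-> n2 <= n1}.
Proof.
move=> f_ni n1 n2 n12; rewrite -lerN2 -!tail_meanN.
by apply: tail_mean_nondecr => // j; rewrite lerN2.
Qed.

End TailMean.
End LogConcave.

Section BoundedSums.
Variable R : realFieldType.

Definition sums_bounded (A : eqType) (f : A -> R) (K : R) :=
  forall s, uniq s -> \sum_(a <- s) f a <= K.

Lemma ler_sum_subset (A : eqType) (s t : seq A) (f : A -> R) :
  uniq s -> uniq t -> {subset s <= t} -> (forall a, 0 <= f a) ->
  \sum_(a <- s) f a <= \sum_(a <- t) f a.
Proof.
move=> s_uniq t_uniq st f_ge0.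
rewrite [leRHS](bigID (mem s)) /= ler_wpDr ?sumr_ge0 // -[leRHS]big_filter.
rewrite [leRHS](perm_big s) //; apply: uniq_perm; rewrite ?filter_uniq // => a.
by rewrite mem_filter andb_idr // => /st.
Qed.

Lemma sums_bounded_geometric (r : R) : 0 <= r < 1 ->
  sums_bounded (fun i => r ^+ i) (1 - r)^-1.
Proof.
move=> /andP[r_ge0 r_lt1] t t_uniq; set N := (\max_(i <- t) i).+1.
have r1_gt0 : 0 < 1 - r by rewrite subr_gt0.
apply: (@le_trans _ _ (\sum_(0 <= i < N) r ^+ i)).
  apply: ler_sum_subset => // [|i it|i]; [exact: iota_uniq| |exact: exprn_ge0].
  by rewrite mem_iota add0n ltnS (leq_bigmax_seq (F := id)).
rewrite big_mkord -div1r ler_pdivlMr // mulrC -opprB mulNr -subrX1 opprB lerBlDr lerDl.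
exact: exprn_ge0.
Qed.

Lemma sums_bounded_pair (A B : eqType) (f : A -> R) (g : B -> R) F G :
  (forall a, 0 <= f a) -> (forall b, 0 <= g b) ->
  sums_bounded f F -> sums_bounded g G ->
  sums_bounded (fun p : A * B => f p.1 * g p.2) (F * G).
Proof.
move=> f_ge0 g_ge0 fF gG s s_uniq.
set s1 := undup (map fst s); set s2 := undup (map snd s).
apply: (@le_trans _ _ (\sum_(p <- [seq (a, b) | a <- s1, b <- s2]) f p.1 * g p.2)).
  apply: ler_sum_subset => // [|[a b] ps|p]; last exact: mulr_ge0.
    by rewrite allpairs_uniq ?undup_uniq // => -[? ?] [? ?].
  by apply/allpairsP; exists (a, b); rewrite !mem_undup; split => //; apply/mapP;
    exists (a, b).
rewrite big_allpairs /=; under eq_bigr do rewrite -mulr_sumr.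
by rewrite -mulr_suml ler_pM ?sumr_ge0 ?fF ?gG ?undup_uniq.
Qed.

End BoundedSums.

Lemma prod_inv_le_expR (R : realType) (I : Type) (s : seq I) (y : I -> R) (q : R) :
  (forall i, 0 <= y i <= q) -> q < 1 ->
  \prod_(i <- s) (1 - y i)^-1 <= expR ((\sum_(i <- s) y i) / (1 - q)).
Proof.
move=> y_q q_lt1; rewrite mulr_suml expR_sum; apply: ler_prod => i _.
have /andP[y_ge0 y_le_q] := y_q i; have q1_gt0 : 0 < 1 - q by rewrite subr_gt0.
have y1_gt0 : 0 < 1 - y i by rewrite subr_gt0 (le_lt_trans y_le_q).
rewrite invr_ge0 ltW //=; apply: le_trans (expR_ge1Dx _).
set t := y i / (1 - q); have t_ge0 : 0 <= t := divr_ge0 y_ge0 (ltW q1_gt0).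
have tq : t * (1 - q) = y i by rewrite divfK ?gt_eqF.
by rewrite -div1r ler_pdivrMr //; nra.
Qed.

Section MultisetSeq.
Variable T : choiceType.
Implicit Types (a : T) (m : multiset T).

Lemma perm_mset1D a m : perm_eq (a +` m)%mset (a :: m).
Proof.
by apply/allP => b _ /=; rewrite !(count_mem_mset, mset1DE) [b == a]eq_sym.
Qed.

Lemma size_mset1D a m : size (a +` m)%mset = (size m).+1.
Proof. by rewrite (perm_size (perm_mset1D a m)). Qed.

Lemma all_mset1D (P : pred T) a m : all P (a +` m)%mset = P a && all P m.
Proof. by rewrite (perm_all _ (perm_mset1D a m)). Qed.

End MultisetSeq.

Lemma esumZl (R : realType) (I : choiceType) (S : set I) (c : R) (a : I -> \bar R) :
  0 <= c -> (forall i, (0 <= a i)%E) ->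
  \esum_(i in S) (c%:E * a i)%E = (c%:E * \esum_(i in S) a i)%E.
Proof.
move=> c0 a0; have [->|cn0] := eqVneq c 0.
  by rewrite mul0e esum1 // => i _; rewrite mul0e.
have c_gt0 : 0 < c by rewrite lt0r cn0.
rewrite /esum -ereal_sup_pZl //; congr ereal_sup; apply/seteqP; split => y /=.
- move=> [A SA <-]; exists (\sum_(i \in A) a i)%E; first by exists A.
  by case: SA => finA _; rewrite !fsbig_finite // ge0_sume_distrr.
- move=> [z [A SA <-] <-]; exists A => //.
  by case: SA => finA _; rewrite !fsbig_finite // ge0_sume_distrr.
Qed.

Section MultisetSums.
Variables (T : choiceType) (R : realType).
Implicit Types (P Q : pred T) (a : T) (m : multiset T) (G : multiset T -> R).

(* A multiset coerces to the sequence of its elements with repetitions, so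
   [size m] is the particle number [nparticles m] (see [size_mset]). *)
Definition msets P n : set (multiset T) := [set m | size m = n /\ all P m].

Definition msum P n G : \bar R := \esum_(m in msets P n) (G m)%:E.

Lemma eq_msum P Q n G : P =1 Q -> msum P n G = msum Q n G.
Proof.
move=> /eq_all PQ; rewrite /msum; congr esum.
by apply/seteqP; split => m [sz Pm]; rewrite /msets /= ?PQ // -PQ.
Qed.

Lemma eq_msum_in P n G G' :
  (forall m, msets P n m -> G m = G' m) -> msum P n G = msum P n G'.
Proof. by move=> GG'; apply: eq_esum => m /GG' ->. Qed.

Lemma msum_ge0 P n G : (forall m, 0 <= G m) -> (0 <= msum P n G)%E.
Proof. by move=> G0; apply: esum_ge0 => m _; rewrite lee_fin. Qed.

Lemma le_msum_pred P Q n G : subpred P Q -> (msum P n G <= msum Q n G)%E.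
Proof.
move=> PQ; apply: ge_ereal_sup => _ [A [finA AP] <-].
apply: ereal_sup_ubound; exists A => //; split => // m /AP[sz Pm].
by split => //; apply: sub_all Pm.
Qed.

Lemma msumZl P n G c : 0 <= c -> (forall m, 0 <= G m) ->
  msum P n (fun m => c * G m) = (c%:E * msum P n G)%E.
Proof.
by move=> c0 G0; rewrite /msum -esumZl // => m; rewrite lee_fin.
Qed.

Lemma msum0 P G : 0 <= G mset0 -> msum P 0 G = (G mset0)%:E.
Proof.
move=> G0; rewrite /msum (_ : msets P 0 = [set mset0]%classic) ?esum_set1 ?lee_fin //.
apply/seteqP; split => m /=.
  by move=> [/eqP]; rewrite size_mset_eq0 => /eqP.
by move=> ->; split; [exact: size_mset0|rewrite enum_mset0].
Qed.

Lemma msum_pred0 n G : msum pred0 n.+1 G = 0%E.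
Proof. by rewrite /msum esum1 // => m []; case: (enum_mset m). Qed.

Lemma msum_split P a n G : P a -> (forall m, 0 <= G m) ->
  msum P n.+1 G = (msum (predD1 P a) n.+1 G + msum P n (fun m => G (a +` m)%mset))%E.
Proof.
move=> Pa G0.
rewrite /msum (esumID [set m : multiset T | a \in m]%classic) => [|m _]; last first.
  by rewrite lee_fin.
rewrite addeC; congr (_ + _)%E.
  congr esum; apply/seteqP; split => m /=.
    move=> [[sz Pm] /negP am]; split => //; apply/allP => k km /=.
    by rewrite (allP Pm) // andbT; apply: contraNneq am => <-.
  move=> [sz Pm]; split; first by split => //; apply: sub_all Pm => k /andP[].
  by move=> /(allP Pm); rewrite /= eqxx.
have -> : (msets P n.+1 `&` [set m : multiset T | a \in m] =
    msetD [mset a]%mset @` msets P n)%classic.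
  apply/seteqP; split => m /=.
    move=> [[sz Pm] am]; exists (m `\ a)%mset; last exact: msetB1K.
    move: sz Pm; rewrite -{1 2}(msetB1K am) size_mset1D all_mset1D.
    by move=> [] ? /andP[].
  move=> [m' [sz Pm'] <-]; split; last exact: mset1D1.
  by split; rewrite ?size_mset1D ?sz // all_mset1D Pa.
by rewrite esum_image // => m1 m2 _ _; apply: (can_inj (msetDKB _)).
Qed.

Lemma msum_finite_approx n G y : (y < msum predT n G)%E ->
  exists2 s : seq T, uniq s & (y < msum (mem s) n G)%E.
Proof.
move=> /ereal_sup_gt[_ [A [finA AT] <-] yA].
exists (undup (flatten [seq enum_mset m | m <- fset_set A])); first exact: undup_uniq.
apply: lt_le_trans yA _; apply: esum_ge; exists A => //; split => // m Am.
split; first by case: (AT m Am).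
apply/allP => k km; rewrite /= mem_undup; apply/flattenP; exists (enum_mset m) => //.
by apply/mapP; exists m; rewrite // in_fset_set // mem_set.
Qed.

End MultisetSums.

Section PartitionFunction.
Variables (T : choiceType) (R : realType) (x : T -> R).
Hypothesis x_gt0 : forall a, 0 < x a.
Implicit Types (a : T) (s : seq T) (m : multiset T).

Definition mweight m : R := \prod_(k <- m) x k.

Lemma mweight0 : mweight mset0 = 1.
Proof. by rewrite /mweight enum_mset0 big_nil. Qed.

Lemma mweight1D a m : mweight (a +` m)%mset = x a * mweight m.
Proof. by rewrite /mweight (perm_big _ (perm_mset1D a m)) big_cons. Qed.

Lemma mweight_ge0 m : 0 <= mweight m.
Proof. by apply: prodr_ge0 => k _; apply: ltW. Qed.

(* The complete homogeneous symmetric polynomial h_n of the weights of the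
   modes in s, through h_n(a :: s) = h_n(s) + x_a h_(n-1)(a :: s). *)
Fixpoint pfun s n : R :=
  if s is a :: s' then
    (fix pfun_a n := if n is n'.+1 then pfun s' n + x a * pfun_a n' else 1) n
  else (n == 0)%:R.

Lemma pfun0 s : pfun s 0 = 1.
Proof. by case: s. Qed.

Lemma pfunS a s n : pfun (a :: s) n.+1 = pfun s n.+1 + x a * pfun (a :: s) n.
Proof. by []. Qed.

Lemma pfun_ge0 s n : 0 <= pfun s n.
Proof.
elim: s n => [|a s IH] n; first by case: n.
by elim: n => [|n IHn]; rewrite ?pfun0 // pfunS addr_ge0 // mulr_ge0 // ltW.
Qed.

Lemma pfun_cons_gt0 a s n : 0 < pfun (a :: s) n.
Proof.
by elim: n => [|n IHn]; rewrite ?pfun0 // pfunS ltr_wpDl ?pfun_ge0 // mulr_gt0.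
Qed.

Lemma pfun_logconcave s : logconcave (pfun s).
Proof.
elim: s => [|a s IH].
  by move=> i j _; rewrite [pfun _ j.+1]/= mulr0 mulr_ge0 ?pfun_ge0.
by apply: (logconcave_conv_geometric (x_gt0 a) _ (pfun_ge0 s) IH); rewrite ?pfun0.
Qed.

Lemma msum_pfun s n : uniq s -> msum (mem s) n mweight = (pfun s n)%:E.
Proof.
have msum0_pfun s' : msum (mem s') 0 mweight = (pfun s' 0)%:E.
  by rewrite msum0 ?mweight0 ?pfun0 ?mweight_ge0.
elim: s n => [|a s IH] n.
  case: n => [|n] _ //; rewrite (@eq_msum _ _ _ pred0) ?msum_pred0 //.
move=> /andP[a_notin_s s_uniq]; elim: n => [|n IHn] //.
rewrite (msum_split _ (mem_head a s)) => [|m]; last exact: mweight_ge0.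
rewrite (@eq_msum _ _ _ (mem s)) => [|k]; last first.
  by rewrite /predD1 /=; case: eqP => [->|]; rewrite ?(negPf a_notin_s).
rewrite [msum _ n _](@eq_msum_in _ _ _ _ _ (fun m => x a * mweight m));
  last by move=> m _; exact: mweight1D.
by rewrite msumZl ?IH ?IHn ?ltW //; exact: mweight_ge0.
Qed.

Lemma pfun_le_prod s n : (forall a, a \in s -> x a < 1) ->
  pfun s n <= \prod_(a <- s) (1 - x a)^-1.
Proof.
elim: s n => [|a s IH] n x_lt1; first by case: n; rewrite big_nil.
have IHs j : pfun s j <= \prod_(b <- s) (1 - x b)^-1.
  by apply: IH => b bs; apply: x_lt1; rewrite inE bs orbT.
have xa_lt1 : 0 < 1 - x a by rewrite subr_gt0 x_lt1 ?mem_head.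
rewrite big_cons mulrC; set P := \prod_(b <- s) _.
have P_ge1 : 1 <= P by rewrite -(pfun0 s) IHs.
have xa_gt0 := x_gt0 a.
elim: n => [|n IHn]; first by rewrite pfun0 ler_pdivlMr // mul1r; lra.
rewrite pfunS; apply: (le_trans (lerD (IHs n.+1) (ler_wpM2l (ltW xa_gt0) IHn))).
rewrite ler_pdivlMr // mulrDl -mulrA divfK ?gt_eqF //.
by rewrite mulrBr mulr1 [x a * P]mulrC subrK.
Qed.

End PartitionFunction.

Section SummableWeights.
Variables (T : choiceType) (R : realType) (x : T -> R) (q K : R).
Hypotheses (x_gt0 : forall a, 0 < x a) (x_le_q : forall a, x a <= q).
Hypotheses (q_lt1 : q < 1) (x_sums : sums_bounded x K).
Implicit Types (s : seq T) (n : nat) (m : multiset T).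

Lemma pfun_bounded s n : uniq s -> pfun x s n <= expR (K / (1 - q)).
Proof.
move=> s_uniq; have x_lt1 a : x a < 1 := le_lt_trans (x_le_q a) q_lt1.
apply: le_trans (pfun_le_prod x_gt0 n (fun a _ => x_lt1 a)) _.
apply: le_trans (prod_inv_le_expR s (fun a => _) q_lt1) _.
  by move=> a; rewrite ltW ?x_le_q.
by rewrite ler_expR ler_pM2r ?invr_gt0 ?subr_gt0 ?x_sums.
Qed.

Lemma msum_le_pfun n B : (forall s, uniq s -> pfun x s n <= B) ->
  (msum predT n (mweight x) <= B%:E)%E.
Proof.
move=> pfun_le_B; rewrite leNgt; apply/negP => /msum_finite_approx[s s_uniq].
by rewrite msum_pfun // lte_fin ltNge pfun_le_B.
Qed.

Definition pfunT n := fine (msum predT n (mweight x)).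

Lemma msum_pfunT n : msum predT n (mweight x) = (pfunT n)%:E.
Proof.
rewrite /pfunT fineK // ge0_fin_numE ?msum_ge0 //; last exact: mweight_ge0.
exact: le_lt_trans (msum_le_pfun (fun s => @pfun_bounded s n)) (ltry _).
Qed.

Lemma pfunT_le n B : (forall s, uniq s -> pfun x s n <= B) -> pfunT n <= B.
Proof. by move=> /msum_le_pfun; rewrite msum_pfunT lee_fin. Qed.

Lemma pfun_le_pfunT s n : uniq s -> pfun x s n <= pfunT n.
Proof.
by move=> s_uniq; rewrite -lee_fin -msum_pfunT -msum_pfun // le_msum_pred.
Qed.

Lemma pfun_subset s1 s2 n : uniq s1 -> uniq s2 -> {subset s1 <= s2} ->
  pfun x s1 n <= pfun x s2 n.
Proof.
move=> s1_uniq s2_uniq s12; rewrite -lee_fin -!msum_pfun //.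
exact: le_msum_pred.
Qed.

Lemma pfunT_gt0 (a : T) n : 0 < pfunT n.
Proof. by apply: lt_le_trans (pfun_cons_gt0 x_gt0 a [::] n) (pfun_le_pfunT _ _). Qed.

Lemma pfunT_mulr_le n y C : 0 <= y -> 0 <= C ->
  (forall s, uniq s -> pfun x s n * y <= C) -> pfunT n * y <= C.
Proof.
move=> y_ge0 C_ge0 le_C; have [->|y_neq0] := eqVneq y 0; first by rewrite mulr0.
have y_gt0 : 0 < y by rewrite lt0r y_neq0.
rewrite -ler_pdivlMr //; apply: pfunT_le => s s_uniq.
by rewrite ler_pdivlMr ?le_C.
Qed.

Lemma pfunT_logconcave : logconcave pfunT.
Proof.
move=> a b ab; have pfunT_ge0 n : 0 <= pfunT n.
  exact: le_trans (pfun_ge0 x_gt0 [::] n) (pfun_le_pfunT _ _).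
have C_ge0 := mulr_ge0 (pfunT_ge0 a.+1) (pfunT_ge0 b).
(* Both factors are compared within the union of the two mode sets; the
   suprema over s1 and s2 are then taken one at a time. *)
have cross s1 s2 : uniq s1 -> uniq s2 ->
    pfun x s1 a * pfun x s2 b.+1 <= pfunT a.+1 * pfunT b.
  move=> s1_uniq s2_uniq; set s := undup (s1 ++ s2).
  have s_uniq : uniq s := undup_uniq _.
  have le_s s' n : {subset s' <= s1 ++ s2} -> uniq s' -> pfun x s' n <= pfun x s n.
    by move=> s'_sub s'_uniq; apply: pfun_subset => // c /s'_sub; rewrite mem_undup.
  apply: le_trans (ler_pM (pfun_ge0 x_gt0 _ _) (pfun_ge0 x_gt0 _ _)
    (le_s s1 a _ s1_uniq) (le_s s2 b.+1 _ s2_uniq)) _.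
  - by move=> c cs1; rewrite mem_cat cs1.
  - by move=> c cs2; rewrite mem_cat cs2 orbT.
  apply: le_trans (pfun_logconcave x_gt0 s ab) _.
  by rewrite ler_pM ?pfun_ge0 ?pfun_le_pfunT.
rewrite mulrC; apply: pfunT_mulr_le => // s2 s2_uniq.
rewrite mulrC; apply: pfunT_mulr_le => // [|s1 s1_uniq]; first exact: pfun_ge0.
exact: cross.
Qed.

Lemma pfunT0 : pfunT 0 = 1.
Proof. by rewrite /pfunT msum0 ?mweight0 ?mweight_ge0. Qed.

Variable k : T.

Lemma msum_predD1 n : msum (predD1 predT k) n.+1 (mweight x) =
  (pfunT n.+1 - x k * pfunT n)%:E.
Proof.
have := msum_pfunT n.+1; rewrite (msum_split _ (isT : predT k)) => [|m]; last first.
  exact: mweight_ge0.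
under eq_fun do rewrite mweight1D.
rewrite msumZl ?msum_pfunT ?ltW // => [|m]; last exact: mweight_ge0.
have : (msum (predD1 predT k) n.+1 (mweight x) \is a fin_num)%E.
  rewrite ge0_fin_numE ?msum_ge0 // => [|m]; last exact: mweight_ge0.
  apply: le_lt_trans (ltry (pfunT n.+1)); rewrite -msum_pfunT.
  exact: le_msum_pred.
move=> /fineK <-; set u := fine _ => u_eq.
have <- : u + x k * pfunT n = pfunT n.+1 by apply: EFin_inj; exact: u_eq.
by rewrite addrK.
Qed.

Lemma msum_occupationS f n : (forall j, 0 <= f j) ->
  msum predT n.+1 (fun m => f (m k) * mweight x m) =
  ((f 0%N * (pfunT n.+1 - x k * pfunT n))%:E +
   (x k)%:E * msum predT n (fun m => (f (m k).+1 * mweight x m)%R))%E.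
Proof.
move=> f_ge0; have G_ge0 m : 0 <= f (m k) * mweight x m by rewrite mulr_ge0 ?mweight_ge0.
rewrite (msum_split _ (isT : predT k)) //; congr (_ + _)%E.
  rewrite EFinM -msum_predD1 -msumZl // => [|m]; last exact: mweight_ge0.
  apply: eq_msum_in => m [_ m_notin]; congr (f _ * _); apply/eqP.
  by rewrite mset_eq0; apply/negP => /(allP m_notin); rewrite /= eqxx.
rewrite -msumZl ?ltW // => [|m]; last by rewrite mulr_ge0 ?mweight_ge0.
by apply: eq_msum_in => m _; rewrite mweight1D mset1DE eqxx add1n mulrCA.
Qed.

Lemma msum_occupation f n : (forall j, 0 <= f j) ->
  msum predT n (fun m => f (m k) * mweight x m) =
  (tail_mean pfunT (x k) f n * pfunT n)%:E.
Proof.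
elim: n f => [|n IH] f f_ge0.
  rewrite msum0 ?mulr_ge0 ?mweight_ge0 // (tail_meanMz _ (pfunT_gt0 k)) big_ord0.
  by rewrite mweight0 mset0E pfunT0 addr0.
rewrite msum_occupationS // (IH (fun j => f j.+1)) // -!EFinM -EFinD.
rewrite !(tail_meanMz _ (pfunT_gt0 k)); congr (_%:E).
rewrite [in RHS]big_ord_recl subSS subn0 [x k * (_ + _)]mulrDr mulr_sumr.
set S := \sum_(i < n) (f (lift ord0 i).+1 - _) * _ * _.
have -> : S = \sum_(i < n) x k * ((f i.+2 - f i.+1) * x k ^+ i.+1 * pfunT (n - i.+1)).
  by apply: eq_bigr => i _; rewrite lift0 subSS exprS; ring.
rewrite /= expr1; ring.
Qed.

End SummableWeights.

Section Modes.
Variables (R : realType) (a1 a2 a3 V beta : R).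
Hypotheses (V_gt0 : 0 < V) (beta_gt0 : 0 < beta).

Let x k := expR (- beta * eigE a1 a2 a3 V k).
Let r t := expR (- beta * (pi ^+ 2 / 2) * V `^ (- (2 * t))).

Lemma r_ge0_lt1 t : 0 <= r t < 1.
Proof.
rewrite expR_ge0 expR_lt1 /= -!mulrA mulNr oppr_lt0.
by rewrite !mulr_gt0 ?powR_gt0 ?divr_gt0 ?exprn_gt0 ?pi_gt0.
Qed.

Lemma mode_weight_le k : x k <= r a1 ^+ k.1.1.+1 * r a2 ^+ k.1.2.+1 * r a3 ^+ k.2.+1.
Proof.
rewrite /x /r -!expRM_natl -!expRD ler_expR /eigE -subr_ge0; set c := pi ^+ 2 / 2.
have c_gt0 : 0 < beta * c by rewrite mulr_gt0 ?divr_gt0 ?exprn_gt0 ?pi_gt0.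
have sq_ge (i : nat) : 0 <= i.+1%:R ^+ 2 - i.+1%:R :> R.
  by rewrite subr_ge0 -natrX ler_nat -{1}(muln1 i.+1) expnS leq_mul2l ltn0Sn.
set n1 := k.1.1.+1%:R; set n2 := k.1.2.+1%:R; set n3 := k.2.+1%:R.
set v1 := V `^ _; set v2 := V `^ _; set v3 := V `^ _.
have -> : n1 * (- beta * c * v1) + n2 * (- beta * c * v2) + n3 * (- beta * c * v3)
    - - beta * (c * (n1 ^+ 2 * v1 + n2 ^+ 2 * v2 + n3 ^+ 2 * v3)) =
    beta * c * ((n1 ^+ 2 - n1) * v1 + (n2 ^+ 2 - n2) * v2 + (n3 ^+ 2 - n3) * v3).
  by ring.
apply: mulr_ge0; first exact: ltW.
by do !apply: addr_ge0; apply: mulr_ge0; rewrite ?powR_ge0 ?sq_ge.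
Qed.

Lemma mode_weight_le_q k : x k <= r a1 * r a2 * r a3.
Proof.
apply: le_trans (mode_weight_le k) _.
have r_le t (i : nat) : r t ^+ i.+1 <= r t.
  have /andP[r_ge0 /ltW r_le1] := r_ge0_lt1 t.
  by rewrite exprS ler_piMr ?exprn_ge0 ?exprn_ile1.
have r_ge0 t : 0 <= r t by case/andP: (r_ge0_lt1 t).
by rewrite !ler_pM ?mulr_ge0 ?exprn_ge0 ?r_le.
Qed.

Lemma mode_weights_bounded :
  sums_bounded x ((1 - r a1)^-1 * (1 - r a2)^-1 * (1 - r a3)^-1).
Proof.
have geom_ge0 t (i : nat) : 0 <= r t ^+ i by case/andP: (r_ge0_lt1 t) => /exprn_ge0.
have geom t := sums_bounded_geometric (r_ge0_lt1 t).
have pair12 := sums_bounded_pair (geom_ge0 a1) (geom_ge0 a2) (geom a1) (geom a2).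
move=> s s_uniq.
apply: (le_trans _ (sums_bounded_pair _ (geom_ge0 a3) pair12 (geom a3) s_uniq)).
  apply: ler_sum => k _; apply: le_trans (mode_weight_le k) _.
  have r_le t (i : nat) : r t ^+ i.+1 <= r t ^+ i.
    have /andP[r_ge0 /ltW r_le1] := r_ge0_lt1 t.
    by rewrite exprS ler_piMl ?exprn_ge0.
  by rewrite !ler_pM ?mulr_ge0 ?r_le.
by move=> [i j]; rewrite mulr_ge0.
Qed.

Let x_gt0 k : 0 < x k := expR_gt0 _.
Let q_lt1 : r a1 * r a2 * r a3 < 1.
Proof.
have /andP[r1_ge0 r1_lt1] := r_ge0_lt1 a1; have /andP[r2_ge0 r2_lt1] := r_ge0_lt1 a2.
have /andP[r3_ge0 r3_lt1] := r_ge0_lt1 a3.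
by rewrite mulr_ilt1 ?mulr_ge0 ?mulr_ilt1.
Qed.

Let pfunT_gt0_modes := pfunT_gt0 x_gt0 mode_weight_le_q q_lt1 mode_weights_bounded.
Let pfunT_lc_modes := pfunT_logconcave x_gt0 mode_weight_le_q q_lt1 mode_weights_bounded.

Lemma energy_mweight m : expR (- beta * energy a1 a2 a3 V m) = mweight x m.
Proof.
rewrite /mweight -expR_sum -mulr_sumr big_mset /energy; congr (expR (_ * _)).
by apply: eq_bigr => k _; rewrite Monoid.iteropE iter_addr_0 mulr_natl.
Qed.

Lemma nparticles_msets n :
  [set m : multiset mode | nparticles m = n]%classic = msets predT n.
Proof.
apply/seteqP; split => m; rewrite /msets /nparticles /= -size_mset.
  by split; last exact: all_predT.
by case.
Qed.

Lemma ctrace_msum n F :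
  ctrace a1 a2 a3 V beta n F = msum predT n (fun m => F m * mweight x m).
Proof.
by rewrite /ctrace nparticles_msets; apply: eq_esum => m _; rewrite energy_mweight.
Qed.

Lemma Zcan_msum n : Zcan a1 a2 a3 V beta n = msum predT n (mweight x).
Proof. by rewrite /Zcan ctrace_msum; congr msum; apply: funext => m; rewrite mul1r. Qed.

Lemma cexp_tail_mean n k f : (forall j, 0 <= f j) ->
  cexp a1 a2 a3 V beta n k f = tail_mean (pfunT x) (x k) f n.
Proof.
move=> f_ge0; rewrite /cexp ctrace_msum Zcan_msum.
rewrite (msum_occupation x_gt0 mode_weight_le_q q_lt1 mode_weights_bounded) //.
by rewrite (msum_pfunT x_gt0 mode_weight_le_q q_lt1 mode_weights_bounded) /= mulfK
  ?gt_eqF ?pfunT_gt0_modes.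
Qed.

Lemma cexp_nondecr k f : (forall j, 0 <= f j) -> (forall j, f j <= f j.+1) ->
  {homo (fun n => cexp a1 a2 a3 V beta n k f) : n1 n2 / (n1 <= n2)%N >-> n1 <= n2}.
Proof.
move=> f_ge0 f_nd n1 n2 n12; rewrite !cexp_tail_mean //.
exact: tail_mean_nondecr (pfunT_gt0_modes k) pfunT_lc_modes (ltW (x_gt0 k))
  _ f_nd _ _ n12.
Qed.

Lemma cexp_nonincr k f : (forall j, 0 <= f j) -> (forall j, f j.+1 <= f j) ->
  {homo (fun n => cexp a1 a2 a3 V beta n k f) : n1 n2 / (n1 <= n2)%N >-> n2 <= n1}.
Proof.
move=> f_ge0 f_ni n1 n2 n12; rewrite !cexp_tail_mean //.
exact: tail_mean_nonincr (pfunT_gt0_modes k) pfunT_lc_modes (ltW (x_gt0 k))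
  _ f_ni _ _ n12.
Qed.

End Modes.

Theorem theorem3p1 (R : realType) (a1 a2 a3 V beta : R)
  (ha12 : a2 <= a1) (ha23 : a3 <= a2) (ha3 : 0 < a3)
  (hsum : a1 + a2 + a3 = 1) (hV : 0 < V) (hbeta : 0 < beta) (k : mode) :
  (forall lambda : R, 0 < lambda ->
     forall n1 n2 : nat, n1%:R / V <= n2%:R / V ->
       cexp a1 a2 a3 V beta n2 k (fun N => expR (- lambda * N%:R))
       <= cexp a1 a2 a3 V beta n1 k (fun N => expR (- lambda * N%:R)))
  /\
  (forall r : nat, (1 <= r)%N ->
     forall n1 n2 : nat, n1%:R / V <= n2%:R / V ->
       cexp a1 a2 a3 V beta n1 k (fun N => (N%:R) ^+ r)
       <= cexp a1 a2 a3 V beta n2 k (fun N => (N%:R) ^+ r)).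
Proof.
have n_le n1 n2 : n1%:R / V <= n2%:R / V -> (n1 <= n2)%N.
  by rewrite ler_pM2r ?invr_gt0 // ler_nat.
split=> [lambda lambda_gt0|r r_gt0] n1 n2 /n_le n12.
- apply: cexp_nonincr => // j.
  by rewrite ler_expR !mulNr lerN2 ler_pM2l // ler_nat.
- apply: cexp_nondecr => // j.
  by rewrite -!natrX ler_nat leq_exp2r.
Qed.
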